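(* Let $n\ge 2$ and let $g_1,g_2\in\hat S_n$ be glides with offsets $k_1$ and $k_2$ respectively. Then $$g_2g_1=\rho^{k_2}(g_1)\,\rho^{-k_1}(g_2).$$
   Context: The affine symmetric group $\hat S_n$ is generated by $s_0,s_1,\dots,s_{n-1}$ (indices taken modulo $n$) subject to $s_i^2=1$, $s_is_js_i=s_js_is_j$ if $i-j\equiv\pm1\pmod n$, and $s_is_j=s_js_i$ if $i-j\not\equiv 0,\pm1\pmod n$. Let $\rho:\hat S_n\to\hat S_n$ be the automorphism with $\rho(s_i)=s_{i+1}$ for all $i$. Let $\phi:\hat S_n\to S_n$ be the homomorphism with $\phi(s_i)=(i\ \ i+1)$ for $1\le i\le n-1$ and $\phi(s_0)=(1\ \ n)$. An element $g\in\hat S_n$ is a glide if for some $k\in\{0,1,\dots,n-1\}$ the permutation $\phi(g)$ sends $j\mapsto j+k$ for $1\le j\le n-k$ and $j\mapsto j+k-n$ for $n-k<j\le n$; this $k$ is the offset of $g$. *)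

From mathcomp Require Import all_boot.
Set Implicit Arguments. Unset Strict Implicit. Unset Printing Implicit Defensive.

(* Words over the generators s_i (i : nat, indices taken modulo n).
   The word [:: i1; ...; im] stands for the product s_{i1} s_{i2} ... s_{im}. *)
Definition word := seq nat.

Definition adj_mod (n i j : nat) : bool :=
  (i %% n == (j + 1) %% n) || (j %% n == (i + 1) %% n).

(* The congruence on words generated by the Coxeter presentation of \hat S_n:
   two words are related iff they represent the same element of \hat S_n. *)
Inductive aeq (n : nat) : word -> word -> Prop :=
| aeq_refl w : aeq n w w
| aeq_sym u v : aeq n u v -> aeq n v u
| aeq_trans u v w : aeq n u v -> aeq n v w -> aeq n u w
| aeq_ctx a b u v : aeq n u v -> aeq n (a ++ u ++ b) (a ++ v ++ b)
| aeq_mod i : aeq n [:: i] [:: i %% n]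
| aeq_sq i : aeq n [:: i; i] [::]
| aeq_braid i j : adj_mod n i j -> aeq n [:: i; j; i] [:: j; i; j]
| aeq_comm i j : i %% n != j %% n -> ~~ adj_mod n i j -> aeq n [:: i; j] [:: j; i].

Definition rho_pow (n k : nat) (w : word) : word := map (fun i => (i + k) %% n) w.
Definition rho_powN (n k : nat) (w : word) : word :=
  map (fun i => (i + (n - k %% n)) %% n) w.

Definition swap (a b x : nat) : nat := if x == a then b else if x == b then a else x.

(* phi(s_i) = (i i+1) for 1 <= i <= n-1, phi(s_0) = (1 n), points 1..n *)
Definition phi_gen (n i : nat) : nat -> nat :=
  if i %% n == 0 then swap 1 n else swap (i %% n) (i %% n).+1.

Definition phi (n : nat) (w : word) : nat -> nat :=
  foldr (fun i f x => phi_gen n i (f x)) id w.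

Definition glide_offset (n : nat) (w : word) (k : nat) : Prop :=
  k < n /\
  (forall j, 1 <= j <= n - k -> phi n w j = j + k) /\
  (forall j, n - k < j <= n -> phi n w j = j + k - n).

(* Realise \hat S_n as periodic permutations of Z: s_j acts as [sZ j], exchanging
   j + m n and j + 1 + m n for every m, and the rotation rho becomes conjugation
   by the translation x |-> x + 1.  A glide g of offset k then satisfies
   g x = x + k (mod n) for all x, and for two such periodic maps the identity of
   the theorem holds pointwise by a one-line computation.

   It remains to see that the action on Z is faithful on words modulo the
   Coxeter relations.  Every periodic bijection g has a normal form [nf g],
   obtained by repeatedly stripping its first right descent; the potential
   [mu g] = sum over a window of (g a - a)^2 strictly decreases, so this
   terminates.  By induction on [mu], the normal form can be computed by
   stripping any descent first: two different first choices are reconciled by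
   a commutation relation when they are far apart and by a braid relation when
   they are adjacent.  Hence every word w is equivalent to [nf (actZ w)]. *)

From mathcomp Require Import all_boot all_order all_algebra zify.
Import Order.TTheory GRing.Theory Num.Theory.
Set Implicit Arguments. Unset Strict Implicit. Unset Printing Implicit Defensive.

Local Open Scope ring_scope.

Lemma eqn_mod_dvdz (n a b : nat) : (a %% n == b %% n)%N = (n%:Z %| a%:Z - b%:Z)%Z.
Proof. by rewrite -eqz_mod_dvd !modz_nat. Qed.

Lemma sum_lt_two_points (R : numDomainType) (I : finType) (F G : I -> R) (p q : I) :
  p != q -> (forall a, a != p -> a != q -> G a = F a) ->
  G p + G q < F p + F q -> \sum_a G a < \sum_a F a.
Proof.
move=> pq GF lt_pq.
have split2 (H : I -> R) :
    \sum_a H a = H p + H q + \sum_(a | (a != p) && (a != q)) H a.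
  rewrite (bigD1 p) // (bigD1 q) 1?eq_sym //= addrA.
  by congr (_ + _); apply: eq_bigl => a; rewrite andbT.
rewrite !split2 (eq_bigr F) ?ltrD2r // => a /andP[]; exact: GF.
Qed.

Lemma sqr_swap_lt (X Y a : int) : Y < X ->
  (Y - a) ^+ 2 + (X - (a + 1)) ^+ 2 < (X - a) ^+ 2 + (Y - (a + 1)) ^+ 2.
Proof. by move=> YX; rewrite !expr2; lia. Qed.

Section AffinePermutations.
Variable n : nat.
Hypothesis n_ge2 : (2 <= n)%N.

Definition sZ (j x : int) : int :=
  if (n%:Z %| x - j)%Z then x + 1 else if (n%:Z %| x - j - 1)%Z then x - 1 else x.

Definition periodic (g : int -> int) : Prop :=
  forall x M, (n%:Z %| M)%Z -> g (x + M) = g x + M.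

Lemma dvdz_small (c : int) : (n%:Z %| c)%Z -> - (2 * n%:Z) < c < 2 * n%:Z ->
  c = 0 \/ c = n%:Z \/ c = - n%:Z.
Proof.
move=> /dvdzP [q ->] c_bounds.
have [->|[->|[->|q_big]]] : q = 0 \/ q = 1 \/ q = -1 \/ 2 <= `|q| by lia.
- by left; rewrite mul0r.
- by right; left; rewrite mul1r.
- by right; right; rewrite mulN1r.
- exfalso; nia.
Qed.

Lemma sZ_up (M j x : int) : (n%:Z %| M)%Z ->
  x - j - M = 0 \/ x - j - M = n%:Z \/ x - j - M = - n%:Z -> sZ j x = x + 1.
Proof.
move=> dvdM xjM; rewrite /sZ.
have -> : x - j = (x - j - M) + M by rewrite subrK.
rewrite (rpredDr _ dvdM); suff -> : (n%:Z %| x - j - M)%Z by [].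
by case: xjM => [->|[->|->]]; rewrite ?rpredN ?dvdzz ?dvdz0.
Qed.

Lemma sZ_down (M j x : int) : (n%:Z %| M)%Z ->
  x - j - M = 1 \/ x - j - M = n%:Z + 1 \/ x - j - M = 1 - n%:Z -> sZ j x = x - 1.
Proof.
move=> dvdM xjM; rewrite /sZ.
have -> : x - j - 1 = (x - j - M - 1) + M by lia.
rewrite (rpredDr _ dvdM); have -> /= : (n%:Z %| x - j - M - 1)%Z.
  by case: xjM => [->|[->|->]]; rewrite ?subrr ?addrK ?rpredN // addrAC subrr add0r rpredN.
case: ifP => // dvd_xj.
have : (n%:Z %| x - j - M)%Z by rewrite rpredB.
by move/dvdz_small; lia.
Qed.

Lemma sZ_fix (M j x : int) : (n%:Z %| M)%Z ->
  1 - 2 * n%:Z < x - j - M < 2 * n%:Z - 1 ->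
  x - j - M != 0 -> x - j - M != n%:Z -> x - j - M != - n%:Z ->
  x - j - M != 1 -> x - j - M != n%:Z + 1 -> x - j - M != 1 - n%:Z -> sZ j x = x.
Proof.
move=> dvdM bounds *; rewrite /sZ.
case: ifP => [dvd_xj|_].
  have : (n%:Z %| x - j - M)%Z by rewrite rpredB.
  by move/dvdz_small; lia.
case: ifP => // dvd_xj1.
have : (n%:Z %| x - j - 1 - M)%Z by rewrite rpredB.
by move/dvdz_small; lia.
Qed.

(* Evaluates every innermost [sZ j x], given a multiple [M] of [n] for which
   [x - j - M] is determined by the context. *)
Ltac eval_sZ M :=
  repeat (match goal with |- context [sZ ?j ?x] =>
    lazymatch x with context [sZ _ _] => fail | _ =>
      first [ rewrite (@sZ_up M j x); [|done|lia]
            | rewrite (@sZ_down M j x); [|done|lia]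
            | rewrite (@sZ_fix M j x); [|done|lia ..] ] end end).

Lemma window_decomp (y : int) :
  exists M r, [/\ (n%:Z %| M)%Z, 0 <= r < n%:Z & y = r + M].
Proof.
exists (y - (y %% n%:Z)%Z), (y %% n%:Z)%Z; split.
- by apply/dvdzP; exists (y %/ n%:Z)%Z; rewrite {1}(divz_eq y n%:Z) addrK.
- by rewrite modz_ge0 ?ltz_mod //=; lia.
- by rewrite addrC subrK.
Qed.

Lemma sZ_periodic (j : int) : periodic (sZ j).
Proof.
move=> x M dvdM; rewrite /sZ.
have -> : x + M - j = (x - j) + M by lia.
have -> : x - j + M - 1 = (x - j - 1) + M by lia.
by rewrite (rpredDr _ dvdM) (rpredDr _ dvdM); case: ifP => _; [lia | case: ifP => _; lia].
Qed.

Lemma sZ_mod (j j' x : int) : (n%:Z %| j - j')%Z -> sZ j x = sZ j' x.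
Proof.
rewrite rpredBC => dvdj; rewrite /sZ.
have -> : x - j - 1 = (x - j' - 1) + (j' - j) by lia.
have -> : x - j = (x - j') + (j' - j) by lia.
by rewrite (rpredDr _ dvdj) (rpredDr _ dvdj).
Qed.

Lemma sZK (j : int) : involutive (sZ j).
Proof.
move=> x; have [M [r [dvdM r_bounds xjE]]] := window_decomp (x - j).
have [r0|[r1|[r0 r1]]] : r = 0 \/ r = 1 \/ (r != 0 /\ r != 1) by lia.
all: eval_sZ M; lia.
Qed.

Lemma sZ_comm (i d x : int) : 2 <= i - d <= n%:Z - 2 -> sZ i (sZ d x) = sZ d (sZ i x).
Proof.
move=> far; have [M [r [dvdM r_bounds xdE]]] := window_decomp (x - d).
have [r0|[r1|[rid|[rid1|[r0 [r1 [rid rid1]]]]]]] : r = 0 \/ r = 1 \/ r = i - d \/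
  r = i - d + 1 \/ (r != 0 /\ r != 1 /\ r != i - d /\ r != i - d + 1) by lia.
all: eval_sZ M; lia.
Qed.

Lemma sZ_braid (p x : int) : (3 <= n)%N ->
  sZ p (sZ (p + 1) (sZ p x)) = sZ (p + 1) (sZ p (sZ (p + 1) x)).
Proof.
move=> n_ge3; have [M [r [dvdM r_bounds xpE]]] := window_decomp (x - p).
have [r0|[r1|[r2|[r0 [r1 r2]]]]] :
  r = 0 \/ r = 1 \/ r = 2 \/ (r != 0 /\ r != 1 /\ r != 2) by lia.
all: eval_sZ M; lia.
Qed.

Lemma sZ_translate (j k x : int) : sZ (j + k) x = sZ j (x - k) + k.
Proof.
rewrite /sZ; have -> : x - (j + k) = x - k - j by lia.
by case: ifP => _; [lia | case: ifP => _; lia].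
Qed.

Definition actZ (w : word) : int -> int := foldr (fun i f x => sZ i%:Z (f x)) id w.

Lemma actZ_cat (u v : word) (x : int) : actZ (u ++ v) x = actZ u (actZ v x).
Proof. by elim: u => //= i u ->. Qed.

Lemma actZ_periodic (w : word) : periodic (actZ w).
Proof. by move=> x M dvdM; elim: w => //= i w ->; apply: sZ_periodic. Qed.

Lemma actZ_inj (w : word) : injective (actZ w).
Proof. by elim: w => //= i w IH x y /(can_inj (sZK i%:Z)) /IH. Qed.

Definition descent (g : int -> int) (x : int) : bool := g (x + 1) < g x.

Definition rmul (g : int -> int) (j : int) : int -> int := fun x => g (sZ j x).

Definition mu (g : int -> int) : int := \sum_(a < n) (g a%:Z - a%:Z) ^+ 2.

Lemma periodic_rmul (g : int -> int) (j : int) : periodic g -> periodic (rmul g j).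
Proof. by move=> g_per x M dvdM; rewrite /rmul sZ_periodic // g_per. Qed.

Lemma mu_ge0 (g : int -> int) : 0 <= mu g.
Proof. by apply: sumr_ge0 => a _; rewrite sqr_ge0. Qed.

Lemma descent_mod (g : int -> int) (x y : int) :
  periodic g -> (n%:Z %| x - y)%Z -> descent g x = descent g y.
Proof.
move=> g_per dvdxy; rewrite /descent.
have -> : x = y + (x - y) by lia.
have -> : y + (x - y) + 1 = (y + 1) + (x - y) by lia.
by rewrite !(g_per _ _ dvdxy) ltrD2r.
Qed.

Lemma mu_rmul_descent_inner (g : int -> int) (d : nat) :
  (d.+1 < n)%N -> descent g d%:Z -> mu (rmul g d%:Z) < mu g.
Proof.
move=> dSn desc_d; have dn := ltnW dSn.
pose p : 'I_n := Ordinal dn; pose q : 'I_n := Ordinal dSn.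
apply: (@sum_lt_two_points _ _ _ _ p q).
- by rewrite -val_eqE /= ltn_eqF.
- move=> a /negP ap /negP aq; rewrite /rmul.
  suff -> : sZ d%:Z a%:Z = a%:Z by [].
  have := ltn_ord a; rewrite -!val_eqE /= in ap aq.
  by move=> a_lt; eval_sZ (0 : int); lia.
rewrite /rmul /=; eval_sZ (0 : int).
have -> : d.+1%:Z = d%:Z + 1 by lia.
by rewrite addrK; apply: sqr_swap_lt.
Qed.

Lemma mu_rmul_descent_last (g : int -> int) (d : nat) : periodic g ->
  d.+1 = n -> descent g d%:Z -> mu (rmul g d%:Z) < mu g.
Proof.
rewrite /descent => g_per dSn desc_d; have dn : (d < n)%N by rewrite -dSn.
pose p : 'I_n := Ordinal (ltnW n_ge2); pose q : 'I_n := Ordinal dn.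
apply: (@sum_lt_two_points _ _ _ _ p q).
- by rewrite -val_eqE /=; apply/eqP; lia.
- move=> a /negP ap /negP aq; rewrite /rmul.
  suff -> : sZ d%:Z a%:Z = a%:Z by [].
  have := ltn_ord a; rewrite -!val_eqE /= in ap aq.
  by move=> a_lt; eval_sZ (0 : int); lia.
rewrite /rmul /=; eval_sZ (0 : int).
have wrap_left : g (0%:Z - 1) = g d%:Z + - n%:Z.
  by rewrite -g_per ?rpredN ?dvdzz //; congr g; lia.
have wrap_right : g (d%:Z + 1) = g 0%:Z + n%:Z.
  by rewrite -g_per ?dvdzz //; congr g; lia.
have nE : n%:Z = d%:Z + 1 by lia.
rewrite wrap_left wrap_right in desc_d *; rewrite nE in desc_d *.
by have := sqr_swap_lt d%:Z desc_d; rewrite !expr2; lia.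
Qed.

Lemma mu_rmul_descent (g : int -> int) (d : nat) :
  periodic g -> (d < n)%N -> descent g d%:Z -> mu (rmul g d%:Z) < mu g.
Proof.
move=> g_per dn desc_d; have [dSn|d_last] := ltnP d.+1 n.
  exact: mu_rmul_descent_inner.
by apply: mu_rmul_descent_last => //; lia.
Qed.

Definition first_descent (g : int -> int) : nat :=
  find (fun d : nat => descent g d%:Z) (iota 0 n).

Lemma first_descent_lt (g : int -> int) (i : nat) :
  (i < n)%N -> descent g i%:Z -> (first_descent g < n)%N.
Proof.
move=> i_lt desc_i; rewrite /first_descent -{2}(size_iota 0 n) -has_find.
by apply/hasP; exists i; rewrite ?mem_iota.
Qed.

Lemma descent_first_descent (g : int -> int) :
  (first_descent g < n)%N -> descent g (first_descent g)%:Z.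
Proof.
move=> lt_n; have := lt_n; rewrite /first_descent -{2}(size_iota 0 n) -has_find.
by move=> /(nth_find 0%N); rewrite nth_iota ?add0n.
Qed.

(* [mu] strictly decreases at each step, so [|mu g| + 1] steps of fuel always
   suffice. *)
Fixpoint nf_rec (fuel : nat) (g : int -> int) : word :=
  if fuel is fuel'.+1 then
    if (first_descent g < n)%N
    then rcons (nf_rec fuel' (rmul g (first_descent g)%:Z)) (first_descent g)
    else [::]
  else [::].

Definition nf (g : int -> int) : word := nf_rec (absz (mu g)).+1 g.

Lemma nf_rec_fuel (fuel fuel' : nat) (g : int -> int) : periodic g ->
  (absz (mu g) < fuel)%N -> (absz (mu g) < fuel')%N -> nf_rec fuel g = nf_rec fuel' g.
Proof.
elim: fuel fuel' g => [|fuel IH] [|fuel'] g g_per //= lt_fuel lt_fuel'.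
case: ifP => // has_desc; congr rcons.
have := mu_rmul_descent g_per has_desc (descent_first_descent has_desc).
have := mu_ge0 (rmul g (first_descent g)%:Z).
by move=> ge0 lt_mu; apply: IH; [exact: periodic_rmul | lia | lia].
Qed.

Lemma nfE (g : int -> int) : periodic g -> nf g =
  if (first_descent g < n)%N
  then rcons (nf (rmul g (first_descent g)%:Z)) (first_descent g) else [::].
Proof.
move=> g_per; rewrite {1}/nf /=; case: ifP => // has_desc; congr rcons.
have := mu_rmul_descent g_per has_desc (descent_first_descent has_desc).
have := mu_ge0 (rmul g (first_descent g)%:Z).
by move=> ge0 lt_mu; apply: nf_rec_fuel; [exact: periodic_rmul | lia | lia].
Qed.

Lemma eq_nf (g g' : int -> int) : g =1 g' -> nf g = nf g'.
Proof.
have eq_mu h h' : h =1 h' -> mu h = mu h'.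
  by move=> eq_h; apply: eq_bigr => a _; rewrite eq_h.
have eq_first h h' : h =1 h' -> first_descent h = first_descent h'.
  by move=> eq_h; apply: eq_find => d; rewrite /descent !eq_h.
move=> eq_g; rewrite /nf (eq_mu _ _ eq_g).
move: (absz (mu g')).+1 => fuel; elim: fuel g g' eq_g => //= fuel IH g g' eq_g.
rewrite (eq_first _ _ eq_g); case: ifP => // _; congr rcons.
by apply: IH => x; rewrite /rmul eq_g.
Qed.

Lemma aeq_catl (u v w : word) : aeq n u v -> aeq n (w ++ u) (w ++ v).
Proof. by move=> /(aeq_ctx w [::]); rewrite !cats0. Qed.

Lemma aeq_catr (u v w : word) : aeq n u v -> aeq n (u ++ w) (v ++ w).
Proof. exact: (@aeq_ctx n [::] w u v). Qed.

Lemma adj_modE (i j : nat) :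
  adj_mod n i j = (n%:Z %| i%:Z - j%:Z - 1)%Z || (n%:Z %| j%:Z - i%:Z - 1)%Z.
Proof. by rewrite /adj_mod !eqn_mod_dvdz !PoszD !opprD !addrA. Qed.

Definition nf_exchange (g : int -> int) : Prop :=
  forall j : nat, (j < n)%N -> descent g j%:Z -> aeq n (nf g) (rcons (nf (rmul g j%:Z)) j).

Section Exchange.
Variable g : int -> int.
Hypothesis g_per : periodic g.
Hypothesis IH : forall h, mu h < mu g -> periodic h -> nf_exchange h.

Lemma exchange_rmul (h : int -> int) (j k : nat) : mu h <= mu g -> periodic h ->
  (j < n)%N -> (k < n)%N -> descent h j%:Z -> descent (rmul h j%:Z) k%:Z ->
  aeq n (rcons (nf (rmul h j%:Z)) j) (nf (rmul (rmul h j%:Z) k%:Z) ++ [:: k; j]).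
Proof.
move=> le_mu h_per j_lt k_lt desc_j desc_k.
have lt_mu := lt_le_trans (mu_rmul_descent h_per j_lt desc_j) le_mu.
have := IH lt_mu (periodic_rmul _ h_per) k_lt desc_k.
by move/(aeq_catr [:: j]); rewrite -!cats1 -catA.
Qed.

Lemma exchange_rmul2 (j k l : nat) : (j < n)%N -> (k < n)%N -> (l < n)%N ->
  descent g j%:Z -> descent (rmul g j%:Z) k%:Z ->
  descent (rmul (rmul g j%:Z) k%:Z) l%:Z ->
  aeq n (rcons (nf (rmul g j%:Z)) j)
    (nf (rmul (rmul (rmul g j%:Z) k%:Z) l%:Z) ++ [:: l; k; j]).
Proof.
move=> j_lt k_lt l_lt desc_j desc_k desc_l.
apply: aeq_trans (exchange_rmul (lexx _) g_per j_lt k_lt desc_j desc_k) _.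
have le_mu := ltW (mu_rmul_descent g_per j_lt desc_j).
have := exchange_rmul le_mu (periodic_rmul _ g_per) k_lt l_lt desc_k desc_l.
by move/(aeq_catr [:: j]); rewrite -cats1 -!catA.
Qed.

Lemma comm_step (i d : nat) : (i < n)%N -> (d < n)%N ->
  descent g i%:Z -> descent g d%:Z -> 2 <= i%:Z - d%:Z <= n%:Z - 2 ->
  aeq n (rcons (nf (rmul g d%:Z)) d) (rcons (nf (rmul g i%:Z)) i).
Proof.
move=> i_lt d_lt desc_i desc_d far.
have desc_di : descent (rmul g d%:Z) i%:Z by rewrite /descent /rmul; eval_sZ (0 : int).
have desc_id : descent (rmul g i%:Z) d%:Z by rewrite /descent /rmul; eval_sZ (0 : int).
have commute : rmul (rmul g d%:Z) i%:Z =1 rmul (rmul g i%:Z) d%:Z.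
  by move=> x; rewrite /rmul (@sZ_comm i%:Z d%:Z x far).
apply: aeq_trans (exchange_rmul (lexx _) g_per d_lt i_lt desc_d desc_di) _.
rewrite (eq_nf commute); apply: aeq_trans (aeq_catl _ (aeq_comm _ _)) _.
- by rewrite !modn_small //; apply/eqP; lia.
- by rewrite adj_modE negb_or; apply/andP; split; apply/negP => /dvdz_small; lia.
exact/aeq_sym/(exchange_rmul (lexx _) g_per i_lt d_lt desc_i desc_id).
Qed.

Lemma braid_step (p q : nat) : (p < n)%N -> (q < n)%N ->
  q%:Z - p%:Z = 1 \/ q%:Z - p%:Z = 1 - n%:Z -> descent g p%:Z -> descent g q%:Z ->
  aeq n (rcons (nf (rmul g p%:Z)) p) (rcons (nf (rmul g q%:Z)) q).
Proof.
move=> p_lt q_lt qpS desc_p desc_q.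
have dvd_q : (n%:Z %| q%:Z - (p%:Z + 1))%Z.
  by case: qpS => qpE; rewrite opprD addrA qpE ?subrr // addrAC subrr add0r rpredN.
have shift_q h : periodic h -> descent h q%:Z = descent h (p%:Z + 1).
  by move=> h_per; apply: descent_mod h_per dvd_q.
have desc_pS : g (p%:Z + 1 + 1) < g (p%:Z + 1) by move: desc_q; rewrite shift_q.
rewrite /descent in desc_p.
(* With [n = 2] the descents at [p] and [p + 1] would contradict periodicity. *)
have n_ge3 : (3 <= n)%N.
  case: (ltnP 2 n) => // n_le2; have n2 : n%:Z = 2 by lia.
  have := g_per p%:Z (dvdzz n%:Z); rewrite n2.
  have -> : p%:Z + 2 = p%:Z + 1 + 1 by lia.
  lia.
have desc1 : descent (rmul g p%:Z) q%:Z.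
  rewrite shift_q; last exact: periodic_rmul.
  rewrite /descent /rmul; eval_sZ (0 : int); rewrite ?addrK; lia.
have desc2 : descent (rmul (rmul g p%:Z) q%:Z) p%:Z.
  by rewrite /descent /rmul; eval_sZ (0 : int); rewrite ?addrK; lia.
have desc3 : descent (rmul g q%:Z) p%:Z.
  by rewrite /descent /rmul; eval_sZ (0 : int); rewrite ?addrK; lia.
have desc4 : descent (rmul (rmul g q%:Z) p%:Z) q%:Z.
  rewrite shift_q; last exact/periodic_rmul/periodic_rmul.
  by rewrite /descent /rmul; eval_sZ (0 : int); rewrite ?addrK; lia.
have braid : rmul (rmul (rmul g p%:Z) q%:Z) p%:Z =1 rmul (rmul (rmul g q%:Z) p%:Z) q%:Z.
  by move=> x; rewrite /rmul !(sZ_mod _ dvd_q) sZ_braid.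
apply: aeq_trans (exchange_rmul2 p_lt q_lt p_lt desc_p desc1 desc2) _.
rewrite (eq_nf braid); apply: aeq_trans (aeq_catl _ (aeq_braid _)) _.
  by rewrite adj_modE; apply/orP; right; rewrite -addrA -opprD.
exact/aeq_sym/(exchange_rmul2 q_lt p_lt q_lt _ desc3 desc4).
Qed.

End Exchange.

Lemma periodic_nf_exchange (g : int -> int) : periodic g -> nf_exchange g.
Proof.
move: {2}(absz (mu g)).+1 (ltnSn (absz (mu g))) => m; elim: m g => // m IHm g lt_m g_per.
have IH h : mu h < mu g -> periodic h -> nf_exchange h.
  by move=> lt_h; apply: IHm; have := mu_ge0 h; lia.
move=> i i_lt desc_i; rewrite nfE // (first_descent_lt i_lt desc_i).
have := descent_first_descent (first_descent_lt i_lt desc_i).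
move: (first_descent g) (first_descent_lt i_lt desc_i) => d d_lt desc_d.
have [->|[far|[far|[adj|adj]]]] : d = i \/ 2 <= i%:Z - d%:Z <= n%:Z - 2 \/
    2 <= d%:Z - i%:Z <= n%:Z - 2 \/ (i%:Z - d%:Z = 1 \/ i%:Z - d%:Z = 1 - n%:Z) \/
    (d%:Z - i%:Z = 1 \/ d%:Z - i%:Z = 1 - n%:Z) by lia.
- exact: aeq_refl.
- exact: comm_step.
- exact/aeq_sym/comm_step.
- exact: braid_step.
- exact/aeq_sym/braid_step.
Qed.

Lemma word_aeq_nf (w : word) : aeq n w (nf (actZ w)).
Proof.
elim/last_ind: w => [|w i IH].
  rewrite nfE; last exact: actZ_periodic.
  case: ifP => [has_desc|_]; last exact: aeq_refl.
  by have := descent_first_descent has_desc; rewrite /descent /=; lia.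
set i' := (i %% n)%N.
have i'_lt : (i' < n)%N by rewrite ltn_pmod //; lia.
have sZ_i x : sZ i%:Z x = sZ i'%:Z x by apply: sZ_mod; rewrite -eqn_mod_dvdz modn_mod.
set f := actZ (rcons w i).
have f_rmul : f =1 rmul (actZ w) i'%:Z.
  by move=> x; rewrite /f -cats1 actZ_cat /= sZ_i.
have f_per : periodic f := actZ_periodic _.
have w_per : periodic (actZ w) := actZ_periodic w.
have w_i : aeq n (rcons w i) (rcons (nf (actZ w)) i').
  rewrite -!cats1; apply: aeq_trans (aeq_catr _ IH) (aeq_catl _ (aeq_mod n i)).
case desc_f: (descent f i'%:Z).
  have := periodic_nf_exchange f_per i'_lt desc_f.
  rewrite (@eq_nf (rmul f i'%:Z) (actZ w)); last by move=> x; rewrite /rmul f_rmul /rmul sZK.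
  by move=> f_nf; apply: aeq_trans w_i (aeq_sym f_nf).
have desc_w : descent (actZ w) i'%:Z.
  have f_neq : f i'%:Z != f (i'%:Z + 1) by apply/eqP => /actZ_inj; lia.
  move: desc_f f_neq; rewrite /descent !f_rmul /rmul.
  by eval_sZ (0 : int); rewrite addrK; lia.
have := periodic_nf_exchange w_per i'_lt desc_w; rewrite -(eq_nf f_rmul) => w_nf.
apply: aeq_trans w_i _; rewrite -!cats1.
apply: aeq_trans (aeq_catr _ w_nf) _; rewrite -cats1 -catA.
by have := aeq_catl (nf f) (aeq_sq n i'); rewrite cats0.
Qed.

Lemma aeq_of_actZ (u v : word) : actZ u =1 actZ v -> aeq n u v.
Proof.
move=> eq_uv; apply: aeq_trans (word_aeq_nf u) _.
by rewrite (eq_nf eq_uv); apply: aeq_sym; apply: word_aeq_nf.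
Qed.

Lemma dvdz_modn_sub (a : nat) : (n%:Z %| (a %% n)%N%:Z - a%:Z)%Z.
Proof. by rewrite -eqn_mod_dvdz modn_mod. Qed.

Lemma actZ_rho_pow (k : nat) (w : word) (x : int) :
  actZ (rho_pow n k w) x = actZ w (x - k%:Z) + k%:Z.
Proof.
elim: w x => [|i w IH] x /=; first by rewrite subrK.
rewrite IH (@sZ_mod _ (i%:Z + k%:Z)); first by rewrite sZ_translate addrK.
by rewrite -PoszD dvdz_modn_sub.
Qed.

Lemma actZ_rho_powN (k : nat) (w : word) (x : int) :
  actZ (rho_powN n k w) x = actZ w (x + k%:Z) - k%:Z.
Proof.
elim: w x => [|i w IH] x /=; first by rewrite addrK.
rewrite IH (@sZ_mod _ (i%:Z - k%:Z)); first by rewrite sZ_translate opprK subrK.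
set a := (i + (n - k %% n))%N.
have -> : (a %% n)%N%:Z - (i%:Z - k%:Z) = ((a %% n)%N%:Z - a%:Z) + (k %/ n).+1%:Z * n%:Z.
  rewrite /a; have := divn_eq k n; have := ltn_pmod k (ltnW n_ge2); lia.
by rewrite rpredD ?dvdz_modn_sub ?dvdz_mull.
Qed.

Lemma dvdz_0_pm (c : int) : c = 0 \/ c = n%:Z \/ c = - n%:Z -> (n%:Z %| c)%Z.
Proof. by case=> [->|[->|->]]; rewrite ?rpredN ?dvdzz ?dvdz0. Qed.

Lemma phi_gen_sZ (i v : nat) : (1 <= v <= n)%N ->
  (1 <= phi_gen n i v <= n)%N /\ (n%:Z %| sZ i%:Z v%:Z - (phi_gen n i v)%:Z)%Z.
Proof.
move=> v_range; rewrite (@sZ_mod _ (i %% n)%N%:Z); last by rewrite rpredBC dvdz_modn_sub.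
have : (i %% n < n)%N by rewrite ltn_pmod //; lia.
rewrite /phi_gen /swap; move: (i %% n)%N => j j_lt.
case: (j =P 0)%N => [j0|j_neq0];
  [ case: (v =P 1)%N => [v1|v_neq1]; last case: (v =P n) => [vn|v_neqn]
  | case: (v =P j) => [vj|v_neqj]; last case: (v =P j.+1) => [vjS|v_neqjS] ].
all: split; [lia | apply: dvdz_0_pm; eval_sZ (0 : int); lia].
Qed.

Lemma phi_actZ (w : word) (v : nat) : (1 <= v <= n)%N ->
  (1 <= phi n w v <= n)%N /\ (n%:Z %| actZ w v%:Z - (phi n w v)%:Z)%Z.
Proof.
move=> v_range; elim: w => [|i w [phi_range dvd_w]] /=; first by rewrite subrr.
have [phi_gen_range dvd_i] := phi_gen_sZ i phi_range; split => //.
set a := actZ w v%:Z; set b := phi n w v.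
have -> : a = b%:Z + (a - b%:Z) by rewrite addrC subrK.
by rewrite sZ_periodic // addrAC rpredD.
Qed.

Lemma glide_actZ (w : word) (k : nat) : glide_offset n w k ->
  forall x, (n%:Z %| actZ w x - x - k%:Z)%Z.
Proof.
move=> [k_lt [phi_low phi_high]] x.
have [M [r [dvdM r_range x1E]]] := window_decomp (x - 1).
have v_range : (1 <= (absz r).+1 <= n)%N by lia.
have [_ dvd_phi] := phi_actZ w v_range.
have -> : x = (absz r).+1%:Z + M by lia.
rewrite actZ_periodic //.
have -> : actZ w (absz r).+1%:Z + M - ((absz r).+1%:Z + M) - k%:Z =
  (actZ w (absz r).+1%:Z - (phi n w (absz r).+1)%:Z) +
  ((phi n w (absz r).+1)%:Z - (absz r).+1%:Z - k%:Z) by lia.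
rewrite rpredD //; apply: dvdz_0_pm.
case: (leqP (absz r).+1 (n - k)) => v_k; [rewrite phi_low | rewrite phi_high]; lia.
Qed.

Lemma periodic_glides_comm (f1 f2 : int -> int) (k1 k2 : int) :
  periodic f1 -> periodic f2 ->
  (forall x, n%:Z %| f1 x - x - k1)%Z -> (forall x, n%:Z %| f2 x - x - k2)%Z ->
  forall x, f2 (f1 x) = f1 (f2 (x + k1) - k1 - k2) + k2.
Proof.
move=> f1_per f2_per f1_glide f2_glide x.
have f1E : f1 x = (x + k1) + (f1 x - x - k1) by lia.
have f2E : f2 (x + k1) - k1 - k2 = x + (f2 (x + k1) - (x + k1) - k2) by lia.
by rewrite {1}f1E f2_per // f2E f1_per //; lia.
Qed.

End AffinePermutations.

Local Close Scope ring_scope.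

Theorem lemma2p1 (n : nat) (w1 w2 : word) (k1 k2 : nat) :
  2 <= n -> glide_offset n w1 k1 -> glide_offset n w2 k2 ->
  aeq n (w2 ++ w1) (rho_pow n k2 w1 ++ rho_powN n k1 w2).
Proof.
move=> n_ge2 glide1 glide2; apply: (aeq_of_actZ n_ge2) => x.
rewrite !actZ_cat (actZ_rho_pow n_ge2) (actZ_rho_powN n_ge2).
exact: (periodic_glides_comm n_ge2 (actZ_periodic n_ge2 w1) (actZ_periodic n_ge2 w2)
          (glide_actZ n_ge2 glide1) (glide_actZ n_ge2 glide2)).
Qed.
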